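(* For $m\ge1$ let $G_m=P_{4m} \times P_{3m}$. Then $\dim_{1,f}(G_m)=\Theta(m^2)$ as $m\to\infty$.
   Context: $P_n$ is the path on $n$ vertices and $\times$ denotes the Cartesian product, so $P_s\times P_t$ is the $s\times t$ grid graph. $d(x,y)$ is the distance in $G$. $d_1(x,y)=\min\{d(x,y),2\}$ and $R_1\{x,y\}=\{z\in V(G): d_1(x,z)\neq d_1(y,z)\}$. For a function $g$ on $V(G)$ and $U\subseteq V(G)$, $g(U)=\sum_{s\in U}g(s)$. A function $h:V(G)\to[0,1]$ is a $1$-truncated resolving function of $G$ if $h(R_1\{x,y\})\ge 1$ for all distinct $x,y\in V(G)$; $\dim_{1,f}(G)$ is the minimum of $h(V(G))$ over all such $h$. $f=\Theta(g)$ means there are positive constants $c_1,c_2,N$ with $c_1|g(m)|\le|f(m)|\le c_2|g(m)|$ for all $m>N$. *)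

From HB Require Import structures.
From mathcomp Require Import all_boot all_order all_algebra.
From mathcomp Require Import classical_sets reals.
Set Implicit Arguments. Unset Strict Implicit. Unset Printing Implicit Defensive.
Import Order.TTheory GRing.Theory Num.Theory.

Section Graphs.
Variable T : finType.
Variable e : rel T.

Definition walk_n (n : nat) (x y : T) : bool :=
  [exists p : n.-tuple T, path e x p && (last x p == y)].

(* graph distance: least n with a walk of length n (any shortest path in a
   connected graph has fewer than #|T| edges); #|T| if unreachable. *)
Definition gdist (x y : T) : nat := find (fun n => walk_n n x y) (iota 0 #|T|).

Definition dist1 (x y : T) : nat := minn (gdist x y) 2.

Definition R1 (x y : T) : {set T} := [set z | dist1 x z != dist1 y z].

Local Open Scope ring_scope.

Definition truncated_resolving_fun (R : realType) (h : T -> R) : Prop :=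
  (forall v, 0 <= h v <= 1) /\
  (forall x y, x != y -> 1 <= \sum_(z in R1 x y) h z).

(* dim_{1,f}(G): the minimum (= infimum) of h(V(G)) over 1-truncated
   resolving functions h *)
Definition frac_trunc_metric_dim (R : realType) : R :=
  inf [set (\sum_(v : T) h v) | h in [set h : T -> R | truncated_resolving_fun h]]%classic.

End Graphs.

Definition path_rel (n : nat) : rel 'I_n :=
  fun i j => (i.+1 == j :> nat) || (j.+1 == i :> nat).

Definition cart_rel (A B : finType) (eA : rel A) (eB : rel B) : rel (A * B) :=
  fun u v => ((u.1 == v.1) && eB u.2 v.2) || (eA u.1 v.1 && (u.2 == v.2)).

Definition grid_rel (s t : nat) : rel ('I_s * 'I_t) :=
  cart_rel (@path_rel s) (@path_rel t).

From HB Require Import structures.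
From mathcomp Require Import all_boot all_order all_algebra.
From mathcomp Require Import classical_sets reals.
From mathcomp Require Import zify.
Import Order.TTheory GRing.Theory Num.Theory.
Local Open Scope ring_scope.

(* Upper bound: x lies in R_1{x,y}, so the constant function 1 is a 1-truncated
   resolving function, of total weight 12 m^2.  Lower bound: cut the grid into
   m^2 disjoint 4 x 3 blocks.  A vertex of R_1{x,y} is at distance at most 1
   from x or from y, so for the two adjacent middle vertices x, y of a block the
   set R_1{x,y} lies inside the block, which therefore carries weight >= 1. *)

Section TruncatedDistance.
Variables (T : finType) (e : rel T).

Lemma walk_n0 (x z : T) : walk_n e 0 x z -> x = z.
Proof. by case/existsP => p /andP[_ /eqP]; rewrite (tuple0 p). Qed.

Lemma walk_n1 (x z : T) : walk_n e 1 x z -> e x z.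
Proof.
case/existsP => -[[|a [|b s]]] //= _.
by rewrite andbT => /andP[exa /eqP <-].
Qed.

Lemma walk_n_gdist (x z : T) :
  (gdist e x z < #|T|)%N -> walk_n e (gdist e x z) x z.
Proof.
move=> ltT; have walk_exists : has (fun n => walk_n e n x z) (iota 0 #|T|).
  by rewrite has_find size_iota.
by have := nth_find 0%N walk_exists; rewrite nth_iota.
Qed.

Lemma gdist_eq0 (x z : T) : (gdist e x z == 0%N) = (x == z).
Proof.
apply/eqP/eqP => [d0 | <-].
  have nonempty : (0 < #|T|)%N by apply/card_gt0P; exists x.
  by apply: walk_n0; rewrite -d0; apply: walk_n_gdist; rewrite d0.
rewrite /gdist; case: #|T| => [|n] //=.
suff -> : walk_n e 0 x x by [].
by apply/existsP; exists [tuple]; rewrite /= eqxx.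
Qed.

Lemma dist1_lt2 (x z : T) : (dist1 e x z < 2)%N -> x = z \/ e x z.
Proof.
rewrite /dist1 => lt2; have le1 : (gdist e x z <= 1)%N by lia.
have [ltT | geT] := ltnP (gdist e x z) #|T|.
  move: (walk_n_gdist _ _ ltT) le1.
  by case: (gdist e x z) => [|[|]] // => [/walk_n0 | /walk_n1]; [left | right].
by left; apply: (fintype_le1P (leq_trans geT le1)).
Qed.

Lemma mem_R1 (x y z : T) :
  z \in R1 e x y -> [\/ x = z, e x z, y = z | e y z].
Proof.
rewrite inE => neq.
have [/dist1_lt2[]|] := ltnP (dist1 e x z) 2; [by constructor | by constructor |].
have [/dist1_lt2[]|] := ltnP (dist1 e y z) 2; [by constructor | by constructor |].
by move: neq; rewrite /dist1; lia.
Qed.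

Lemma R1_self (x y : T) : x != y -> x \in R1 e x y.
Proof.
rewrite eq_sym -gdist_eq0 inE /dist1.
by have := gdist_eq0 x x; rewrite eqxx; lia.
Qed.

End TruncatedDistance.

Section FractionalDimension.
Variables (T : finType) (e : rel T) (R : realType).

Lemma truncated_resolving_fun1 : truncated_resolving_fun e (fun=> 1 : R).
Proof.
split=> [v | x y neq]; first by rewrite lexx ler01.
rewrite sumr_const ler1n; apply/card_gt0P; exists x.
exact: R1_self.
Qed.

Let resolving_sums :=
  [set (\sum_(v : T) h v) | h in [set h : T -> R | truncated_resolving_fun e h]]%classic.

Lemma resolving_sums_card : resolving_sums #|T|%:R.
Proof.
by exists (fun=> 1); [exact: truncated_resolving_fun1 | rewrite sumr_const].
Qed.

Lemma frac_trunc_metric_dim_le_card : frac_trunc_metric_dim e R <= #|T|%:R.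
Proof.
apply: ge_inf resolving_sums_card; exists 0 => _ [h [h01 _] <-].
by apply: sumr_ge0 => v _; case/andP: (h01 v).
Qed.

(* The fibres of [blk] partition [T] and each of them carries weight at least 1. *)
Lemma card_le_frac_trunc_metric_dim (B : finType) (blk : T -> B) (x y : B -> T) :
  (forall b, x b != y b) ->
  (forall b, R1 e (x b) (y b) \subset blk @^-1: [set b]) ->
  #|B|%:R <= frac_trunc_metric_dim e R.
Proof.
move=> neq R1_fibre; apply: lb_le_inf.
  by exists #|T|%:R; exact: resolving_sums_card.
move=> _ [h [h01 resolving] <-].
have h_ge0 v : 0 <= h v by case/andP: (h01 v).
rewrite (partition_big blk xpredT) //= -sum1_card natr_sum.
apply: ler_sum => b _.
rewrite (eq_bigl (mem (blk @^-1: [set b]))) => [|v]; last by rewrite !inE.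
rewrite (big_setID (R1 e (x b) (y b))) /= (finset.setIidPr (R1_fibre b)).
apply: le_trans (resolving _ _ (neq b)) _.
by rewrite lerDl sumr_ge0.
Qed.

End FractionalDimension.

Arguments frac_trunc_metric_dim_le_card {T e} R.
Arguments card_le_frac_trunc_metric_dim {T e} R {B blk x y}.

Lemma grid_rel_near (s t : nat) (u v : 'I_s * 'I_t) : grid_rel u v ->
  [/\ (u.1 <= v.1.+1)%N, (v.1 <= u.1.+1)%N, (u.2 <= v.2.+1)%N & (v.2 <= u.2.+1)%N].
Proof.
case: u v => [[a ?] [b ?]] [[c ?] [d ?]].
rewrite /grid_rel /cart_rel /path_rel /= -!val_eqE /=.
by move=> adj; split; lia.
Qed.

Section GridBlocks.
Variable m : nat.
Local Notation V := ('I_(4 * m) * 'I_(3 * m))%type.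

Lemma ltn_ord_divn (k : nat) (i : 'I_(k * m)) : (i %/ k < m)%N.
Proof. by case: k i => [[] // | k] i; rewrite ltn_divLR // [(m * _)%N]mulnC. Qed.

Lemma ltn_ord_mul_add (k r : nat) (i : 'I_m) : (r < k)%N -> (k * i + r < k * m)%N.
Proof. by have := ltn_ord i; nia. Qed.

Definition grid_block (z : V) : 'I_m * 'I_m :=
  (Ordinal (ltn_ord_divn _ z.1), Ordinal (ltn_ord_divn _ z.2)).

(* The middle vertices (4i+1, 3j+1) and (4i+2, 3j+1) of the 4 x 3 block (i, j):
   their closed neighbourhoods stay inside the block. *)
Definition block_left (b : 'I_m * 'I_m) : V :=
  (Ordinal (ltn_ord_mul_add 4 1 b.1 isT),
   Ordinal (ltn_ord_mul_add 3 1 b.2 isT)).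

Definition block_right (b : 'I_m * 'I_m) : V :=
  (Ordinal (ltn_ord_mul_add 4 2 b.1 isT),
   Ordinal (ltn_ord_mul_add 3 1 b.2 isT)).

Lemma block_left_neq_right (b : 'I_m * 'I_m) : block_left b != block_right b.
Proof. by apply/negP => /eqP [] /eqP; rewrite eqn_add2l. Qed.

Lemma grid_block_near (b : 'I_m * 'I_m) (w z : V) :
  (4 * b.1 + 1 <= w.1 <= 4 * b.1 + 2)%N -> (w.2 = 3 * b.2 + 1 :> nat)%N ->
  w = z \/ grid_rel w z -> grid_block z = b.
Proof.
case: b w z => i j [[a ?] [b ?]] [[c ?] [d ?]] /= w1 w2 near.
have [c1 c2] : (c %/ 4 = i /\ d %/ 3 = j)%N.
  by case: near => [[<- <-] | /grid_rel_near[] /=]; lia.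
by congr pair; apply: val_inj.
Qed.

Lemma R1_block_sub (b : 'I_m * 'I_m) :
  R1 (@grid_rel (4 * m) (3 * m)) (block_left b) (block_right b)
    \subset grid_block @^-1: [set b].
Proof.
apply/fintype.subsetP => z /mem_R1 near; rewrite !inE; apply/eqP.
case: near => near;
  [ apply: (grid_block_near b (block_left b)) | apply: (grid_block_near b (block_left b))
  | apply: (grid_block_near b (block_right b)) | apply: (grid_block_near b (block_right b)) ];
  rewrite /= ?leqnn ?leq_add2l //; by [left | right].
Qed.

End GridBlocks.

Lemma grid_frac_trunc_metric_dim_bounds (R : realType) (m : nat) :
  (m%:R : R) ^+ 2 <= frac_trunc_metric_dim (@grid_rel (4 * m) (3 * m)) R <=
  12 * (m%:R : R) ^+ 2.
Proof.
apply/andP; split.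
  have := card_le_frac_trunc_metric_dim R (@block_left_neq_right m) (@R1_block_sub m).
  by rewrite card_prod card_ord natrM expr2.
apply: le_trans (frac_trunc_metric_dim_le_card R) _.
by rewrite card_prod !card_ord -natrX -[12]/(12%:R) -natrM ler_nat; nia.
Qed.

Theorem proposition3p8 (R : realType) :
  exists (c1 c2 : R) (N : nat), 0 < c1 /\ 0 < c2 /\
    forall m : nat, (N < m)%N ->
      c1 * `|(m%:R : R) ^+ 2| <=
        `|frac_trunc_metric_dim (@grid_rel (4 * m) (3 * m)) R| /\
      `|frac_trunc_metric_dim (@grid_rel (4 * m) (3 * m)) R|
        <= c2 * `|(m%:R : R) ^+ 2|.
Proof.
exists 1, 12, 0%N; do 2!split => //; move=> m _.
have /andP[lower upper] := grid_frac_trunc_metric_dim_bounds R m.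
have sq_ge0 : 0 <= (m%:R : R) ^+ 2 by rewrite exprn_ge0.
by rewrite mul1r !ger0_norm //; exact: le_trans lower.
Qed.
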